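(* Let $L>0$, $\mu\le0$, $\kappa:=\mu/L$, $\bar h(\kappa):=\frac{3}{1+\kappa+\sqrt{1-\kappa+\kappa^2}}$, and $\bar\kappa:=\frac{-9-5\sqrt5+\sqrt{190+90\sqrt5}}{4}\approx-0.1001$. Define on $(0,\bar h(\kappa)]$ $$p(h,\kappa)=\begin{cases}2h-h^2\frac{-\kappa}{1-\kappa}, & h\in(0,1],\\[2pt] \frac{h(2-h)(2-\kappa h)}{2-(1+\kappa)h}, & h\in[1,\bar h(\kappa)].\end{cases}$$ Then the step size $h_*$ maximizing $h\mapsto p(h,\kappa)$ over $(0,\bar h(\kappa)]$ (equivalently, minimizing the worst-case bound $\frac{2L[f(x_0)-f_*]}{1+Np(h,\kappa)}$ for the gradient method with constant step $h/L$ on $f\in\mathcal{F}_{\mu,L}$) is $$h_*(\kappa)=\begin{cases}h_{\mathrm{opt}}, & \kappa\le\bar\kappa,\\ \bar h(\kappa), & \bar\kappa<\kappa\le0,\end{cases}$$ where $h_{\mathrm{opt}}$ is the unique solution in $[1,\bar h(\kappa)]$ of $$-\kappa(1+\kappa)h^3+\big[3\kappa+(1+\kappa)^2\big]h^2-4(1+\kappa)h+4=0.$$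
   Context: For $L>0$ and $\mu\le L$, $\mathcal{F}_{\mu,L}(\mathbb{R}^d)$ denotes the class of differentiable functions $f:\mathbb{R}^d\to\mathbb{R}$ such that both $\frac L2\|\cdot\|^2-f$ and $f-\frac{\mu}{2}\|\cdot\|^2$ are convex. *)

From Stdlib Require Import Reals.
Open Scope R_scope.

Definition hbar (k : R) : R := 3 / (1 + k + sqrt (1 - k + k ^ 2)).

Definition kbar : R := (-9 - 5 * sqrt 5 + sqrt (190 + 90 * sqrt 5)) / 4.

(* p(h,kappa), piecewise; the two branches agree at h = 1. *)
Definition pfun (h k : R) : R :=
  if Rle_dec h 1 then 2 * h - h ^ 2 * (- k / (1 - k))
  else h * (2 - h) * (2 - k * h) / (2 - (1 + k) * h).

Definition cubic (h k : R) : R :=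
  - k * (1 + k) * h ^ 3 + (3 * k + (1 + k) ^ 2) * h ^ 2 - 4 * (1 + k) * h + 4.

Definition is_unique_maximizer (k h : R) : Prop :=
  0 < h <= hbar k /\
  (forall h', 0 < h' <= hbar k -> pfun h' k <= pfun h k) /\
  (forall h', 0 < h' <= hbar k -> pfun h' k = pfun h k -> h' = h).

From Stdlib Require Import Reals Lra Psatz.
From Coquelicot Require Import Coquelicot.
Open Scope R_scope.

(* On (0, 1] the first branch of p increases, so the maximum is attained on
   [1, hbar k], where p' = 2 cubic / (2 - (1 + k) h)^2 has the sign of the cubic.
   The cubic equals 1 at h = 1 and is strictly decreasing on [1, hbar k], which
   lies in [1, 2); hence p increases up to the root of the cubic, when there is
   one in [1, hbar k], and decreases after it, and otherwise p increases on the
   whole interval.  Which case occurs is decided by the sign of the cubic at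
   hbar k: eliminating hbar k with k hbar^2 - 2 (1 + k) hbar + 3 = 0 and
   rationalising the square root, this sign is that of
   k^2 + (9 + 5 sqrt 5) / 2 k + 1, whose root in (-1, 0) is kbar. *)

Lemma lt_of_is_derive_pos (f df : R -> R) (a b : R) :
  a < b ->
  (forall c, a <= c <= b -> is_derive f c (df c)) ->
  (forall c, a < c < b -> 0 < df c) ->
  f a < f b.
Proof.
  intros Hab Hder Hpos.
  destruct (MVT_cor2 f df a b Hab) as [c [Hmvt Hc]].
  { intros c Hc. apply is_derive_Reals, Hder, Hc. }
  specialize (Hpos c Hc). nra.
Qed.

Lemma gt_of_is_derive_neg (f df : R -> R) (a b : R) :
  a < b ->
  (forall c, a <= c <= b -> is_derive f c (df c)) ->
  (forall c, a < c < b -> df c < 0) ->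
  f b < f a.
Proof.
  intros Hab Hder Hneg.
  destruct (MVT_cor2 f df a b Hab) as [c [Hmvt Hc]].
  { intros c Hc. apply is_derive_Reals, Hder, Hc. }
  specialize (Hneg c Hc). nra.
Qed.

Lemma sqrt5_gt : 9 / 5 < sqrt 5.
Proof.
  pose proof (sqrt_pos 5) as Hr0.
  pose proof (sqrt_sqrt 5 ltac:(lra)) as Hr2.
  nra.
Qed.

Lemma kbar_bounds : -1 < kbar < 0.
Proof.
  pose proof sqrt5_gt as Hr.
  pose proof (sqrt_sqrt 5 ltac:(lra)) as Hr2.
  unfold kbar. set (r := sqrt 5) in *.
  pose proof (sqrt_pos (190 + 90 * r)) as Ht0.
  pose proof (sqrt_sqrt (190 + 90 * r) ltac:(nra)) as Ht2.
  set (t := sqrt (190 + 90 * r)) in *.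
  assert (5 + 5 * r < t) by nra.
  assert (t < 9 + 5 * r) by nra.
  lra.
Qed.

Lemma kbar_root : kbar ^ 2 + (9 + 5 * sqrt 5) / 2 * kbar + 1 = 0.
Proof.
  pose proof sqrt5_gt as Hr.
  pose proof (sqrt_sqrt 5 ltac:(lra)) as Hr2.
  unfold kbar. set (r := sqrt 5) in *.
  pose proof (sqrt_sqrt (190 + 90 * r) ltac:(nra)) as Ht2.
  set (t := sqrt (190 + 90 * r)) in *.
  replace (((-9 - 5 * r + t) / 4) ^ 2 + (9 + 5 * r) / 2 * ((-9 - 5 * r + t) / 4) + 1)
    with ((t * t - (9 + 5 * r) ^ 2 + 16) / 16) by field.
  rewrite Ht2. nra.
Qed.

Lemma kbar_quadratic_factor (k : R) :
  k ^ 2 + (9 + 5 * sqrt 5) / 2 * k + 1 = (k - kbar) * (k + kbar + (9 + 5 * sqrt 5) / 2).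
Proof. pose proof kbar_root. nra. Qed.

Lemma cubic_hbar_rationalized_sqr_diff (k : R) :
  ((3 * (1 + k) ^ 2 - 5 * k) * sqrt (1 - k + k ^ 2)) ^ 2
  - ((1 + k) * (3 * (1 + k) ^ 2 - 10 * k)) ^ 2 =
  3 * k * (k ^ 2 + (9 + 5 * sqrt 5) / 2 * k + 1) * (k ^ 2 + (9 - 5 * sqrt 5) / 2 * k + 1).
Proof.
  rewrite Rpow_mult_distr, pow2_sqrt by nra.
  pose proof (sqrt_sqrt 5 ltac:(lra)) as Hr2.
  set (r := sqrt 5) in *.
  replace (3 * k * (k ^ 2 + (9 + 5 * r) / 2 * k + 1) * (k ^ 2 + (9 - 5 * r) / 2 * k + 1))
    with (3 * k * ((k ^ 2 + 1) ^ 2 + 9 * k * (k ^ 2 + 1) + (81 - 25 * (r * r)) / 4 * k ^ 2))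
    by field.
  rewrite Hr2. field.
Qed.

Lemma cubic_hbar_rationalized_neg_iff (k : R) :
  k < 0 ->
  (3 * (1 + k) ^ 2 - 5 * k) * sqrt (1 - k + k ^ 2) - (1 + k) * (3 * (1 + k) ^ 2 - 10 * k) < 0
  <-> kbar < k.
Proof.
  intros Hk.
  pose proof kbar_bounds as Hkbar. pose proof sqrt5_gt as Hr.
  pose proof (cubic_hbar_rationalized_sqr_diff k) as Hdiff.
  rewrite kbar_quadratic_factor in Hdiff.
  pose proof (sqrt_sqrt (1 - k + k ^ 2) ltac:(nra)) as Hs2.
  pose proof (sqrt_pos (1 - k + k ^ 2)) as Hs0.
  set (s := sqrt (1 - k + k ^ 2)) in *. set (r := sqrt 5) in *.
  assert (Hs : 0 < s) by nra.
  set (X := (3 * (1 + k) ^ 2 - 5 * k) * s) in *.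
  set (Y := (1 + k) * (3 * (1 + k) ^ 2 - 10 * k)) in *.
  assert (HX : 0 < X) by (unfold X; nra).
  destruct (Rle_dec k (-1)) as [Hk1 | Hk1].
  - assert (Y <= 0) by (unfold Y; nra).
    split; intro; lra.
  - assert (HY : 0 < Y) by (unfold Y; nra).
    assert (Hf : 0 < k ^ 2 + (9 - 5 * r) / 2 * k + 1) by nra.
    assert (0 < k + kbar + (9 + 5 * r) / 2) by lra.
    set (f := k ^ 2 + (9 - 5 * r) / 2 * k + 1) in *.
    set (P := (k - kbar) * (k + kbar + (9 + 5 * r) / 2)) in *.
    split; intro Hlt.
    + destruct (Rlt_le_dec kbar k) as [| Hle]; [assumption |].
      assert (P <= 0) by (unfold P; nra).
      assert (0 <= 3 * k * P) by nra.
      assert (0 <= X ^ 2 - Y ^ 2) by (rewrite Hdiff; nra).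
      nra.
    + assert (0 < P) by (unfold P; nra).
      assert (3 * k * P < 0) by nra.
      assert (X ^ 2 - Y ^ 2 < 0) by (rewrite Hdiff; nra).
      nra.
Qed.

Definition p_right (h k : R) : R := h * (2 - h) * (2 - k * h) / (2 - (1 + k) * h).

Lemma pfun_right (h k : R) : 1 < h -> pfun h k = p_right h k.
Proof. intros Hh. unfold pfun. destruct (Rle_dec h 1); [lra | reflexivity]. Qed.

Lemma is_derive_p_right (h k : R) :
  2 - (1 + k) * h <> 0 ->
  is_derive (fun x => p_right x k) h (2 * cubic h k / (2 - (1 + k) * h) ^ 2).
Proof.
  intros Hd. unfold p_right, cubic. auto_derive; [exact Hd | field; exact Hd].
Qed.

Section NonpositiveKappa.

Variable k : R.
Hypothesis Hk : k <= 0.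

Lemma pfun_left_le (h : R) : 0 < h <= 1 -> pfun h k <= p_right 1 k.
Proof.
  intros Hh. unfold pfun. destruct (Rle_dec h 1) as [_ | ]; [| lra].
  unfold p_right.
  replace (1 * (2 - 1) * (2 - k * 1) / (2 - (1 + k) * 1))
    with (2 - 1 ^ 2 * (- k / (1 - k))) by (field; lra).
  assert (Hc : 0 <= - k / (1 - k) < 1).
  { split.
    - apply Rdiv_le_0_compat; lra.
    - apply Rlt_div_l; lra. }
  set (c := - k / (1 - k)) in *.
  assert (0 < 2 - c * (1 + h)) by nra.
  assert (0 <= (1 - h) * (2 - c * (1 + h))) by (apply Rmult_le_pos; lra).
  assert (2 - 1 ^ 2 * c - (2 * h - h ^ 2 * c) = (1 - h) * (2 - c * (1 + h))) by ring.
  lra.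
Qed.

Lemma hbar_denom_pos : 0 < 1 + k + sqrt (1 - k + k ^ 2).
Proof.
  pose proof (sqrt_pos (1 - k + k ^ 2)) as Hs0.
  pose proof (sqrt_sqrt (1 - k + k ^ 2) ltac:(nra)) as Hs2.
  set (s := sqrt _) in *.
  nra.
Qed.

Lemma hbar_mul_denom : hbar k * (1 + k + sqrt (1 - k + k ^ 2)) = 3.
Proof. pose proof hbar_denom_pos. unfold hbar. field. lra. Qed.

Lemma hbar_bounds : 1 < hbar k < 2.
Proof.
  pose proof hbar_denom_pos as Hd. pose proof hbar_mul_denom as Hmul.
  pose proof (sqrt_pos (1 - k + k ^ 2)) as Hs0.
  pose proof (sqrt_sqrt (1 - k + k ^ 2) ltac:(nra)) as Hs2.
  set (s := sqrt _) in *. set (H := hbar k) in *.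
  assert (s < 2 - k) by nra.
  assert (1 / 2 - k < s) by nra.
  split; nra.
Qed.

Lemma hbar_root : k * hbar k ^ 2 - 2 * (1 + k) * hbar k + 3 = 0.
Proof.
  pose proof hbar_denom_pos as Hd. pose proof hbar_mul_denom as Hmul.
  pose proof (sqrt_sqrt (1 - k + k ^ 2) ltac:(nra)) as Hs2.
  set (s := sqrt _) in *. set (H := hbar k) in *.
  assert (E : (k * H ^ 2 - 2 * (1 + k) * H + 3) * (1 + k + s) ^ 2 =
              k * (H * (1 + k + s)) ^ 2 - 2 * (1 + k) * (H * (1 + k + s)) * (1 + k + s)
              + 3 * (1 + k + s) ^ 2) by ring.
  rewrite Hmul in E.
  assert (Hz : (k * H ^ 2 - 2 * (1 + k) * H + 3) * (1 + k + s) ^ 2 = 0) by nra.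
  apply Rmult_integral in Hz as [Hz | Hz]; [exact Hz | nra].
Qed.

Lemma p_right_denom_pos (h : R) : 0 <= h <= hbar k -> 0 < 2 - (1 + k) * h.
Proof.
  intros Hh.
  pose proof hbar_denom_pos as Hd. pose proof hbar_mul_denom as Hmul.
  pose proof hbar_bounds as Hb.
  pose proof (sqrt_sqrt (1 - k + k ^ 2) ltac:(nra)) as Hs2.
  pose proof (sqrt_pos (1 - k + k ^ 2)) as Hs0.
  set (s := sqrt _) in *. set (H := hbar k) in *.
  assert (1 + k < 2 * s) by nra.
  assert (0 < 2 - (1 + k) * H) by nra.
  destruct (Rle_dec 0 (1 + k)); nra.
Qed.

Lemma cubic_decreasing (x y : R) :
  1 <= x -> x < y -> y <= hbar k -> cubic y k < cubic x k.
Proof.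
  intros Hx Hxy Hy. pose proof hbar_bounds.
  apply (gt_of_is_derive_neg (fun h => cubic h k)
    (fun h => -3 * k * (1 + k) * h ^ 2 + 2 * (3 * k + (1 + k) ^ 2) * h - 4 * (1 + k))); [exact Hxy | |].
  - intros c _. unfold cubic. auto_derive; [exact I | ring].
  - intros c Hc.
    (* each coefficient of this polynomial in k is nonpositive for c in [1, 2) *)
    replace (-3 * k * (1 + k) * c ^ 2 + 2 * (3 * k + (1 + k) ^ 2) * c - 4 * (1 + k))
      with ((2 * c - 4) + k * (-3 * c ^ 2 + 10 * c - 4) + k ^ 2 * (2 * c - 3 * c ^ 2)) by ring.
    assert (0 < -3 * c ^ 2 + 10 * c - 4) by nra.
    assert (2 * c - 3 * c ^ 2 < 0) by nra.
    nra.
Qed.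

Lemma cubic_injective (x y : R) :
  1 <= x <= hbar k -> 1 <= y <= hbar k -> cubic x k = cubic y k -> x = y.
Proof.
  intros Hx Hy Hxy.
  destruct (Rtotal_order x y) as [Hlt | [Heq | Hgt]]; [| exact Heq |].
  - pose proof (cubic_decreasing x y (proj1 Hx) Hlt (proj2 Hy)). lra.
  - pose proof (cubic_decreasing y x (proj1 Hy) Hgt (proj2 Hx)). lra.
Qed.

Lemma p_right_increasing (x y : R) :
  1 <= x -> x < y -> y <= hbar k ->
  (forall c, x < c < y -> 0 < cubic c k) -> p_right x k < p_right y k.
Proof.
  intros Hx Hxy Hy Hpos.
  apply (lt_of_is_derive_pos (fun h => p_right h k)
    (fun h => 2 * cubic h k / (2 - (1 + k) * h) ^ 2)); [exact Hxy | |].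
  - intros c Hc. apply is_derive_p_right.
    apply Rgt_not_eq, p_right_denom_pos. lra.
  - intros c Hc. apply Rdiv_lt_0_compat.
    + specialize (Hpos c Hc). lra.
    + apply pow_lt, p_right_denom_pos. lra.
Qed.

Lemma p_right_decreasing (x y : R) :
  1 <= x -> x < y -> y <= hbar k ->
  (forall c, x < c < y -> cubic c k < 0) -> p_right y k < p_right x k.
Proof.
  intros Hx Hxy Hy Hneg.
  apply (gt_of_is_derive_neg (fun h => p_right h k)
    (fun h => 2 * cubic h k / (2 - (1 + k) * h) ^ 2)); [exact Hxy | |].
  - intros c Hc. apply is_derive_p_right.
    apply Rgt_not_eq, p_right_denom_pos. lra.
  - intros c Hc. apply Rdiv_neg_pos.
    + specialize (Hneg c Hc). lra.
    + apply pow_lt, p_right_denom_pos. lra.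
Qed.

Lemma pfun_lt_of_cubic_sign (m h : R) :
  1 < m <= hbar k ->
  (forall c, 1 <= c < m -> 0 < cubic c k) ->
  (forall c, m < c <= hbar k -> cubic c k < 0) ->
  0 < h <= hbar k -> h <> m -> pfun h k < pfun m k.
Proof.
  intros Hm Hpos Hneg Hh Hhm.
  rewrite (pfun_right m) by lra.
  destruct (Rle_dec h 1) as [Hh1 | Hh1].
  - pose proof (pfun_left_le h (conj (proj1 Hh) Hh1)).
    assert (p_right 1 k < p_right m k).
    { apply p_right_increasing; try lra. intros c Hc. apply Hpos. lra. }
    lra.
  - rewrite (pfun_right h) by lra.
    destruct (Rlt_le_dec h m).
    + apply p_right_increasing; try lra. intros c Hc. apply Hpos. lra.
    + apply p_right_decreasing; try lra. intros c Hc. apply Hneg. lra.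
Qed.

Lemma is_unique_maximizer_of_cubic_sign (m : R) :
  1 < m <= hbar k ->
  (forall c, 1 <= c < m -> 0 < cubic c k) ->
  (forall c, m < c <= hbar k -> cubic c k < 0) ->
  is_unique_maximizer k m.
Proof.
  intros Hm Hpos Hneg.
  pose proof (pfun_lt_of_cubic_sign m) as Hlt.
  split; [lra | split].
  - intros h Hh. destruct (Req_dec h m) as [-> | Hhm]; [lra |].
    apply Rlt_le, Hlt; auto.
  - intros h Hh Heq. destruct (Req_dec h m) as [| Hhm]; [assumption |].
    specialize (Hlt h Hm Hpos Hneg Hh Hhm). lra.
Qed.

Lemma cubic_hbar_rationalized :
  k * (1 + k + sqrt (1 - k + k ^ 2)) * cubic (hbar k) k =
  (3 * (1 + k) ^ 2 - 5 * k) * sqrt (1 - k + k ^ 2) - (1 + k) * (3 * (1 + k) ^ 2 - 10 * k).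
Proof.
  pose proof hbar_root as Hroot. pose proof hbar_mul_denom as Hmul.
  set (s := sqrt _) in *. set (H := hbar k) in *.
  assert (E : k * (1 + k + s) * cubic H k
              - ((3 * (1 + k) ^ 2 - 5 * k) * s - (1 + k) * (3 * (1 + k) ^ 2 - 10 * k)) =
              (1 + k + s) * (- k * (1 + k) * H + 3 * k - (1 + k) ^ 2)
                * (k * H ^ 2 - 2 * (1 + k) * H + 3)
              + (1 + k) * (5 * k - 2 * (1 + k) ^ 2) * (H * (1 + k + s) - 3))
    by (unfold cubic; ring).
  rewrite Hroot, Hmul in E. lra.
Qed.

Lemma cubic_hbar_pos_iff : 0 < cubic (hbar k) k <-> kbar < k.
Proof.
  pose proof kbar_bounds.
  destruct (Req_dec k 0) as [Hk0 | Hk0].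
  - assert (Hh : hbar k = 3 / 2).
    { unfold hbar. rewrite Hk0. replace (1 - 0 + 0 ^ 2) with 1 by ring.
      rewrite sqrt_1. field. }
    rewrite Hh, Hk0. unfold cubic. split; intro; lra.
  - pose proof hbar_denom_pos.
    rewrite <- (cubic_hbar_rationalized_neg_iff k) by lra.
    rewrite <- cubic_hbar_rationalized.
    assert (k * (1 + k + sqrt (1 - k + k ^ 2)) < 0) by nra.
    split; intro; nra.
Qed.

Lemma cubic_root_exists : k <= kbar -> exists m, 1 < m <= hbar k /\ cubic m k = 0.
Proof.
  intros Hkbar. pose proof hbar_bounds.
  assert (Hhbar : cubic (hbar k) k <= 0).
  { apply Rnot_lt_le. rewrite cubic_hbar_pos_iff. lra. }
  assert (H1 : cubic 1 k = 1) by (unfold cubic; ring).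
  destruct (IVT_cor (fun h => cubic h k) 1 (hbar k)) as [m [Hm Hroot]]; [| lra | nra |].
  { intro x. unfold cubic. reg. }
  exists m. split; [| exact Hroot].
  destruct (Req_dec m 1) as [-> |]; lra.
Qed.

End NonpositiveKappa.

Theorem proposition4p6 (L mu : R) (HL : 0 < L) (Hmu : mu <= 0) :
  let k := mu / L in
  (k <= kbar ->
     exists hopt : R,
       (1 <= hopt <= hbar k /\ cubic hopt k = 0) /\
       (forall h, 1 <= h <= hbar k -> cubic h k = 0 -> h = hopt) /\
       is_unique_maximizer k hopt) /\
  (kbar < k -> is_unique_maximizer k (hbar k)).
Proof.
  intros k.
  assert (Hk : k <= 0).
  { pose proof (Rinv_0_lt_compat L HL). unfold k, Rdiv. nra. }
  pose proof (hbar_bounds k Hk) as Hhbar.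
  split; intro Hkbar.
  - destruct (cubic_root_exists k Hk Hkbar) as [m [Hm Hroot]].
    exists m. split; [split; [lra | exact Hroot] | split].
    + intros h Hh Hh0. apply (cubic_injective k Hk); [exact Hh | lra | congruence].
    + apply is_unique_maximizer_of_cubic_sign; [exact Hk | exact Hm | |].
      * intros c Hc. rewrite <- Hroot. apply cubic_decreasing; lra.
      * intros c Hc. rewrite <- Hroot. apply cubic_decreasing; lra.
  - apply is_unique_maximizer_of_cubic_sign; [exact Hk | lra | |].
    + intros c Hc. apply (Rlt_trans _ (cubic (hbar k) k)).
      * apply cubic_hbar_pos_iff; assumption.
      * apply cubic_decreasing; lra.
    + intros c Hc. lra.
Qed.
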